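(* For complex $a,c$ with $|ac|<1$, \begin{align*} \sum_{n=0}^\infty \bigl(1-q^{2n+1}\bigr) \frac{\bigl(q^2/a, q^2/c; q^2\bigr)_n}{\bigl(q^2 a, q^2c; q^2\bigr)_n} (ac)^n \sum_{j=-n}^n (-1)^j q^{n^2-j^2} =\frac{\bigl(q^2, ac; q^2\bigr)_\infty}{\bigl(q^2 a, q^2 c; q^2\bigr)_\infty}\sum_{n=0}^\infty \frac{\bigl(q^2/a, q^2/c; q^2\bigr)_n}{\bigl(1+q^{2n+1}\bigr)\bigl(q^4; q^4\bigr)_n} (-ac)^n. \end{align*}
   Context: Throughout, $q$ is a complex number with $0<|q|<1$. For $x\in\mathbb{C}$ and base $p\in\{q^2,q^4\}$, $(x;p)_\infty=\prod_{k=0}^\infty(1-xp^k)$ and, for an integer $n\ge 0$, $(x;p)_n=\prod_{k=0}^{n-1}(1-xp^k)$; also $(x_1,\dots,x_m;p)_n=(x_1;p)_n\cdots(x_m;p)_n$ for $n$ an integer or $\infty$. *)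

From Stdlib Require Import Reals ZArith.
From Coquelicot Require Import Coquelicot.
Open Scope C_scope.

Fixpoint qpoch (x p : C) (n : nat) : C :=
  match n with O => 1%R | S m => qpoch x p m * (1%R - x * Cpow p m) end.

Definition is_qpoch_inf (x p P : C) : Prop :=
  filterlim (fun n => qpoch x p n) eventually (locally P).

Definition inner_sum (q : C) (n : nat) : C :=
  sum_n_m (fun k : nat =>
    let j := (Z.of_nat k - Z.of_nat n)%Z in
    Cpow (Copp 1%R) (Z.abs_nat j) *
    Cpow q (Z.to_nat (Z.of_nat n * Z.of_nat n - j * j)%Z)) 0 (2 * n).

From Stdlib Require Import Reals ZArith Lia Lra ClassicalEpsilon.
From Coquelicot Require Import Coquelicot.
Open Scope C_scope.

(* Write p = q^2 and x = ac. The pair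
     alpha_r = (1 - q^(2r+1)) sum_(|j|<=r) (-1)^j q^(r^2-j^2),
     beta_n  = (-1)^n / ((1 + q^(2n+1)) (q^4;q^4)_n)
   is a Bailey pair, beta_n = sum_(r<=n) alpha_r / ((p;p)_(n-r) (p;p)_(n+r+1)): exchanging the two
   finite sums, every column sums in closed form, and what remains is the alternating q-binomial sum
   sum_(i<=2n) (-1)^i / ((p;p)_i (p;p)_(2n-i)) = 1/(q^4;q^4)_n.
   Multiplying by gamma_n = (p/a, p/c; p)_n x^n and interchanging the summations (Tannery), the
   right-hand series becomes sum_r alpha_r gamma_r D_r / (p;p)_(2r+1), where D_r is the 2phi1 series
   with parameters p^(r+1)/a, p^(r+1)/c; p^(2r+2) at argument x, a q-Gauss sum. Its contiguous relation
   shows that D_r (pa, pc; p)_r (1 - p) / (p;p)_(2r+1) does not depend on r; as r -> oo, D_r tends to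
   sum_k x^k / (p;p)_k = 1 / (x;p)_oo (Euler), so D_0 = (1 - p) (pa, pc; p)_oo / ((p, x; p)_oo), and this
   constant is exactly the ratio between the two sides. *)

Lemma exp_monotone (x y : R) : (x <= y)%R -> (exp x <= exp y)%R.
Proof. intros [H|H]; [left; now apply exp_increasing | subst; lra]. Qed.

Lemma Cmod_one_minus_ge (z : C) : (1 - Cmod z <= Cmod (1 - z))%R.
Proof.
  pose proof (Cmod_triangle (1 - z) z) as H.
  replace (1 - z + z) with (RtoC 1) in H by ring. rewrite Cmod_1 in H. lra.
Qed.

Lemma Cmod_one_minus_le (z : C) : (Cmod (1 - z) <= 1 + Cmod z)%R.
Proof. eapply Rle_trans; [apply Cmod_triangle|]. rewrite Cmod_opp, Cmod_1. lra. Qed.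

Lemma one_minus_neq0 (z : C) : (Cmod z < 1)%R -> 1 - z <> 0.
Proof.
  intros H E. replace z with (RtoC 1) in H by (replace z with (1 - (1 - z)) by ring; rewrite E; ring).
  rewrite Cmod_1 in H. lra.
Qed.

Lemma one_plus_neq0 (z : C) : (Cmod z < 1)%R -> 1 + z <> 0.
Proof.
  intros H. replace (1 + z) with (1 - - z) by ring. apply one_minus_neq0. rewrite Cmod_opp. exact H.
Qed.

Lemma pow_le_one (t : R) n : (0 <= t <= 1)%R -> (t ^ n <= 1)%R.
Proof. intros Ht. rewrite <- (pow1 n). apply pow_incr. exact Ht. Qed.

Lemma Cmod_Cpow_le1 (p : C) k : (Cmod p <= 1)%R -> (Cmod (Cpow p k) <= 1)%R.
Proof. intros Hp. rewrite Cmod_pow. apply pow_le_one. split; [apply Cmod_ge_0 | exact Hp]. Qed.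

Lemma Cmod_Cpow_succ_lt1 (p : C) k : (Cmod p < 1)%R -> (Cmod (Cpow p (S k)) < 1)%R.
Proof.
  intros Hp. rewrite Cmod_pow. apply pow_lt_1_compat; [pose proof (Cmod_ge_0 p); lra | lia].
Qed.

Lemma exp_le_one_minus (y : R) : (0 <= y < 1)%R -> (exp (- (y / (1 - y))) <= 1 - y)%R.
Proof.
  intros Hy. rewrite exp_Ropp. pose proof (exp_ineq1_le (y / (1 - y))).
  pose proof (exp_pos (y / (1 - y))).
  apply Rmult_le_reg_r with (exp (y / (1 - y))); [lra|].
  rewrite Rinv_l by lra.
  apply Rle_trans with ((1 - y) * (1 + y / (1 - y)))%R; [right; field; lra|].
  apply Rmult_le_compat_l; lra.
Qed.

Lemma succ_mul_pow_le (s : R) r : (0 <= s < 1)%R -> (INR (S r) * s ^ r <= / (1 - s))%R.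
Proof.
  intros Hs. apply Rle_trans with ((1 - s ^ S r) / (1 - s))%R.
  - induction r as [|r IH]; [simpl; right; field; lra|].
    pose proof (pow_le s r ltac:(lra)). pose proof (pow_le_one s (S r) ltac:(lra)).
    apply Rle_trans with (s * (INR (S r) * s ^ r) + s ^ S r)%R; [rewrite S_INR; simpl; right; ring|].
    apply Rle_trans with (s * ((1 - s ^ S r) / (1 - s)) + s ^ S r)%R;
      [apply Rplus_le_compat_r, Rmult_le_compat_l; lra|].
    apply Rmult_le_reg_r with (1 - s)%R; [lra|].
    replace ((s * ((1 - s ^ S r) / (1 - s)) + s ^ S r) * (1 - s))%R
      with (s - s * s ^ S r + s ^ S r * (1 - s))%R by (field; lra).
    replace ((1 - s ^ S (S r)) / (1 - s) * (1 - s))%R with (1 - s * s ^ S r)%R by (simpl; field; lra).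
    nra.
  - unfold Rdiv. rewrite <- (Rmult_1_l (/ (1 - s))) at 2. apply Rmult_le_compat_r.
    + left. apply Rinv_0_lt_compat. lra.
    + pose proof (pow_le s (S r) ltac:(lra)). lra.
Qed.

Lemma Cmod_div_le (a b : C) (A c : R) :
  (0 < c)%R -> (Cmod a <= A)%R -> (c <= Cmod b)%R -> (Cmod (a / b) <= A / c)%R.
Proof.
  intros Hc Ha Hb. assert (b <> 0) by (intros E; rewrite E, Cmod_0 in Hb; lra).
  unfold Cdiv. rewrite Cmod_mult, Cmod_inv by auto.
  apply Rmult_le_compat; auto using Cmod_ge_0.
  - left. apply Rinv_0_lt_compat. lra.
  - apply Rinv_le_contravar; auto.
Qed.

(** * Limits of complex sequences *)

(* [locally] is taken in C's own uniform structure, the one used by [is_series]; Coquelicot's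
   [filterlim_mult] is stated for the AbsRing structure on C, whose [locally] is not convertible
   to it, so products and inverses are handled by hand below. *)
Notation Clim u l := (filterlim u eventually (locally (l : C))).

Lemma Clim_epsilon (u : nat -> C) (l : C) :
  Clim u l <-> forall eps : R, (0 < eps)%R ->
    exists N, forall n, (N <= n)%nat -> (Cmod (u n - l) < eps)%R.
Proof.
  rewrite filterlim_locally_ball_norm. split.
  - intros H eps Heps. destruct (H (mkposreal eps Heps)) as [N HN]. exists N. exact HN.
  - intros H eps. destruct (H eps (cond_pos eps)) as [N HN]. exists N. exact HN.
Qed.

Lemma Clim_unique (u : nat -> C) (l1 l2 : C) : Clim u l1 -> Clim u l2 -> l1 = l2.
Proof. exact (filterlim_locally_unique u l1 l2). Qed.

Lemma Clim_plus (u v : nat -> C) (l m : C) :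
  Clim u l -> Clim v m -> Clim (fun n => u n + v n) (l + m).
Proof.
  intros Hu Hv. exact (filterlim_comp_2 _ _ _ Hu Hv (filterlim_plus (V := C_NormedModule) l m)).
Qed.

Lemma Clim_opp (u : nat -> C) (l : C) : Clim u l -> Clim (fun n => - u n) (- l).
Proof. intros Hu. eapply filterlim_comp; [exact Hu | exact (filterlim_opp (V := C_NormedModule) l)]. Qed.

Lemma Clim_scal (c : C) (u : nat -> C) (l : C) : Clim u l -> Clim (fun n => c * u n) (c * l).
Proof.
  intros Hu. eapply filterlim_comp; [exact Hu | exact (filterlim_scal_r (V := C_NormedModule) c l)].
Qed.

Lemma Clim_mult (u v : nat -> C) (l m : C) :
  Clim u l -> Clim v m -> Clim (fun n => u n * v n) (l * m).
Proof.
  intros Hu Hv. destruct (filterlim_bounded u (ex_intro _ l Hu)) as [B HB].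
  change (forall n, (Cmod (u n) <= B)%R) in HB.
  assert (HB0 : (0 <= B)%R) by (eapply Rle_trans; [apply Cmod_ge_0 | apply (HB 0%nat)]).
  apply Clim_epsilon. intros eps Heps.
  assert (Hm : (0 <= Cmod m)%R) by apply Cmod_ge_0.
  destruct (proj1 (Clim_epsilon u l) Hu (eps / (2 * (Cmod m + 1)))%R) as [N1 HN1].
  { apply Rdiv_lt_0_compat; lra. }
  destruct (proj1 (Clim_epsilon v m) Hv (eps / (2 * (B + 1)))%R) as [N2 HN2].
  { apply Rdiv_lt_0_compat; lra. }
  exists (N1 + N2)%nat. intros n Hn.
  specialize (HN1 n ltac:(lia)). specialize (HN2 n ltac:(lia)). specialize (HB n).
  replace (u n * v n - l * m) with (u n * (v n - m) + (u n - l) * m) by ring.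
  eapply Rle_lt_trans; [apply Cmod_triangle|]. rewrite !Cmod_mult.
  assert (A1 : (Cmod (u n) * Cmod (v n - m) <= B * (eps / (2 * (B + 1))))%R).
  { apply Rmult_le_compat; try apply Cmod_ge_0; lra. }
  assert (A2 : (Cmod (u n - l) * Cmod m <= eps / (2 * (Cmod m + 1)) * Cmod m)%R).
  { apply Rmult_le_compat_r; lra. }
  assert (A3 : (B * (eps / (2 * (B + 1))) < eps / 2)%R).
  { apply Rmult_lt_reg_r with (2 * (B + 1))%R; [lra|]. field_simplify; lra. }
  assert (A4 : (eps / (2 * (Cmod m + 1)) * Cmod m < eps / 2)%R).
  { apply Rmult_lt_reg_r with (2 * (Cmod m + 1))%R; [lra|]. field_simplify; lra. }
  lra.
Qed.

Lemma Clim_subseq (u : nat -> C) (l : C) (phi : nat -> nat) :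
  (forall n, (phi n < phi (S n))%nat) -> Clim u l -> Clim (fun n => u (phi n)) l.
Proof. intros Hphi Hu. exact (filterlim_comp _ _ _ _ _ _ _ _ (eventually_subseq phi Hphi) Hu). Qed.

Lemma Clim_shift (u : nat -> C) (l : C) k : Clim u l -> Clim (fun n => u (n - k)%nat) l.
Proof.
  intros Hu. apply (filterlim_comp _ _ _ (fun n => (n - k)%nat) u _ eventually); [|exact Hu].
  intros P [N HN]. exists (N + k)%nat. intros n Hn. apply HN. lia.
Qed.

Lemma Clim_Cmod (u : nat -> C) (l c : C) :
  Clim u l -> filterlim (fun n => Cmod (u n - c)) eventually (locally (Cmod (l - c))).
Proof.
  intros Hu.
  apply (filterlim_comp _ _ _ (fun n => u n - c) (@norm _ C_NormedModule) _ (locally (l - c))).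
  - exact (Clim_plus u (fun _ => - c) l (- c) Hu (filterlim_const _)).
  - exact (filterlim_norm (V := C_NormedModule) (l - c)).
Qed.

Lemma Clim_norm_le (u : nat -> C) (l c : C) (B : R) N :
  Clim u l -> (forall n, (N <= n)%nat -> (Cmod (u n - c) <= B)%R) -> (Cmod (l - c) <= B)%R.
Proof.
  intros Hu HB.
  refine (closed_filterlim_loc _ (fun r => r <= B)%R _ (Clim_Cmod u l c Hu) _ _).
  - exists N. exact HB.
  - apply closed_le.
Qed.

Lemma Clim_norm_ge (u : nat -> C) (l : C) (e : R) :
  Clim u l -> (forall n, (e <= Cmod (u n))%R) -> (e <= Cmod l)%R.
Proof.
  intros Hu He. replace l with (l - 0) by ring.
  refine (closed_filterlim_loc _ (fun r => e <= r)%R _ (Clim_Cmod u l 0 Hu) _ _).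
  - exists 0%nat. intros n _. replace (u n - 0) with (u n) by ring. apply He.
  - apply closed_ge.
Qed.

Lemma Clim_inv (u : nat -> C) (l : C) (c : R) :
  (0 < c)%R -> (forall n, (c <= Cmod (u n))%R) -> Clim u l -> Clim (fun n => / u n) (/ l).
Proof.
  intros Hc Hb Hu.
  assert (Hl : (c <= Cmod l)%R) by exact (Clim_norm_ge u l c Hu Hb).
  assert (l0 : l <> 0) by (intro E; rewrite E, Cmod_0 in Hl; lra).
  apply Clim_epsilon. intros eps He.
  destruct (proj1 (Clim_epsilon u l) Hu (eps * (c * c))%R) as [N HN].
  { apply Rmult_lt_0_compat; nra. }
  exists N. intros n Hn. specialize (HN n Hn). specialize (Hb n).
  assert (un0 : u n <> 0) by (intro E; rewrite E, Cmod_0 in Hb; lra).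
  replace (/ u n - / l) with ((l - u n) / (u n * l)) by (field; auto).
  unfold Cdiv. rewrite Cmod_mult, Cmod_inv, Cmod_mult by (apply Cmult_neq_0; auto).
  rewrite <- Cmod_opp in HN. replace (- (u n - l)) with (l - u n) in HN by ring.
  assert (Hul : (c * c <= Cmod (u n) * Cmod l)%R) by (apply Rmult_le_compat; lra).
  apply Rmult_lt_reg_r with (Cmod (u n) * Cmod l)%R; [nra|].
  rewrite Rmult_assoc, Rinv_l, Rmult_1_r by nra. nra.
Qed.

Lemma Clim_geometric_bound (u : nat -> C) (K t : R) :
  (0 <= t < 1)%R -> (forall n, (Cmod (u n) <= K * t ^ n)%R) -> Clim u 0.
Proof.
  intros Ht HB. apply Clim_epsilon. intros eps He.
  destruct (Rle_lt_dec K 0) as [HK|HK].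
  - exists 0%nat. intros n _. replace (u n - 0) with (u n) by ring. specialize (HB n).
    pose proof (pow_le t n ltac:(lra)). nra.
  - destruct (pow_lt_1_zero t ltac:(rewrite Rabs_pos_eq; lra) (eps / K)%R) as [N HN].
    { apply Rdiv_lt_0_compat; lra. }
    exists N. intros n Hn. replace (u n - 0) with (u n) by ring. specialize (HN n Hn).
    rewrite Rabs_pos_eq in HN by (apply pow_le; lra).
    eapply Rle_lt_trans; [apply HB|].
    apply Rmult_lt_reg_r with (/ K)%R; [apply Rinv_0_lt_compat; lra|].
    replace (K * t ^ n * / K)%R with (t ^ n)%R by (field; lra). exact HN.
Qed.

Lemma Clim_Cpow_scaled (z b : C) : (Cmod b < 1)%R -> Clim (fun r => z * Cpow b r) 0.
Proof.
  intros Hb. apply (Clim_geometric_bound _ (Cmod z) (Cmod b)); [split; [apply Cmod_ge_0 | exact Hb]|].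
  intros r. rewrite Cmod_mult, Cmod_pow. lra.
Qed.

(** * Finite sums and series *)

(* [csum f N] is the sum of [f i] for [i < N]; unlike Coquelicot's [sum_n] it is stated with
   [Cplus], so [ring] and [field] see through it. *)
Fixpoint csum (f : nat -> C) (N : nat) : C :=
  match N with O => 0 | S n => csum f n + f n end.

Lemma csum_ext (f g : nat -> C) N : (forall i, (i < N)%nat -> f i = g i) -> csum f N = csum g N.
Proof. induction N as [|N IH]; simpl; intros H; [|rewrite IH, H]; auto. Qed.

Lemma csum_zero (f : nat -> C) N : (forall i, (i < N)%nat -> f i = 0) -> csum f N = 0.
Proof. induction N as [|N IH]; simpl; intros H; [|rewrite IH, H by auto; ring]; auto. Qed.

Lemma csum_add (f : nat -> C) a b : csum f (a + b) = csum f a + csum (fun i => f (a + i)%nat) b.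
Proof.
  induction b as [|b IH]; simpl; [rewrite Nat.add_0_r | rewrite Nat.add_succ_r; simpl; rewrite IH]; ring.
Qed.

Lemma csum_succ_l (f : nat -> C) n : csum f (S n) = f O + csum (fun i => f (S i)) n.
Proof. change (S n) with (1 + n)%nat. rewrite csum_add. simpl. ring. Qed.

Lemma csum_plus (f g : nat -> C) N : csum (fun i => f i + g i) N = csum f N + csum g N.
Proof. induction N as [|N IH]; simpl; [|rewrite IH]; ring. Qed.

Lemma csum_scal (c : C) (f : nat -> C) N : csum (fun i => c * f i) N = c * csum f N.
Proof. induction N as [|N IH]; simpl; [|rewrite IH]; ring. Qed.

Lemma csum_telescope (G : nat -> C) N : csum (fun i => G i - G (S i)) N = G O - G N.
Proof. induction N as [|N IH]; simpl; [|rewrite IH]; ring. Qed.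

Lemma csum_swap (h : nat -> nat -> C) M N :
  csum (fun i => csum (h i) N) M = csum (fun j => csum (fun i => h i j) M) N.
Proof.
  induction M as [|M IH]; simpl.
  - symmetry. apply csum_zero. reflexivity.
  - rewrite IH, <- csum_plus. reflexivity.
Qed.

Lemma csum_triangle (h : nat -> nat -> C) N :
  csum (fun n => csum (h n) (S n)) N = csum (fun r => csum (fun k => h (r + k)%nat r) (N - r)) N.
Proof.
  induction N as [|N IH]; [reflexivity|].
  change (csum (fun n => csum (h n) (S n)) (S N))
    with (csum (fun n => csum (h n) (S n)) N + (csum (h N) N + h N N)).
  rewrite IH. change (csum ?f (S N)) with (csum f N + f N).
  rewrite (csum_ext (fun r => csum (fun k => h (r + k)%nat r) (S N - r))
                    (fun r => csum (fun k => h (r + k)%nat r) (N - r) + h N r)).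
  - rewrite csum_plus, Nat.sub_succ_l, Nat.sub_diag by lia. simpl. rewrite Nat.add_0_r. ring.
  - intros r Hr. replace (S N - r)%nat with (S (N - r)) by lia. simpl. do 2 f_equal. lia.
Qed.

Lemma Cmod_csum_geometric (f : nat -> C) (K t : R) N :
  (0 <= t < 1)%R -> (forall k, (Cmod (f k) <= K * t ^ k)%R) -> (Cmod (csum f N) <= K / (1 - t))%R.
Proof.
  intros Ht Hf.
  assert (HK : (0 <= K)%R) by (specialize (Hf O); pose proof (Cmod_ge_0 (f O)); simpl in Hf; lra).
  assert (Hpart : (Cmod (csum f N) <= K * (1 - t ^ N) / (1 - t))%R).
  { induction N as [|N IH]; simpl csum.
    - rewrite Cmod_0. simpl. right. field. lra.
    - eapply Rle_trans; [apply Cmod_triangle|].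
      eapply Rle_trans; [apply Rplus_le_compat; [apply IH | apply Hf]|].
      right. simpl. field. lra. }
  eapply Rle_trans; [exact Hpart|]. unfold Rdiv. apply Rmult_le_compat_r.
  - left. apply Rinv_0_lt_compat. lra.
  - pose proof (pow_le t N ltac:(lra)). nra.
Qed.

Lemma sum_n_csum (a : nat -> C) n : sum_n a n = csum a (S n).
Proof.
  induction n as [|n IH].
  - rewrite sum_O. simpl. ring.
  - rewrite sum_Sn, IH. reflexivity.
Qed.

Lemma is_series_csum (a : nat -> C) (l : C) : is_series a l <-> Clim (csum a) l.
Proof.
  unfold is_series. split; intros H.
  - apply (filterlim_ext_loc (fun n => sum_n a (n - 1)%nat)).
    + exists 1%nat. intros n Hn. rewrite sum_n_csum. f_equal. lia.
    + exact (Clim_shift (sum_n a) l 1 H).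
  - apply (filterlim_ext (fun n => csum a (S n))).
    + intros n. symmetry. apply sum_n_csum.
    + exact (Clim_subseq (csum a) l S (fun n => Nat.lt_succ_diag_r (S n)) H).
Qed.

Lemma is_series_C_unique (a : nat -> C) (l1 l2 : C) : is_series a l1 -> is_series a l2 -> l1 = l2.
Proof. exact (filterlim_locally_unique (sum_n a) l1 l2). Qed.

Lemma is_series_C_plus (a b : nat -> C) (la lb : C) :
  is_series a la -> is_series b lb -> is_series (fun n => a n + b n) (la + lb).
Proof. exact (is_series_plus (V := C_NormedModule) a b la lb). Qed.

Lemma is_series_C_scal (c : C) (a : nat -> C) (l : C) :
  is_series a l -> is_series (fun n => c * a n) (c * l).
Proof. exact (is_series_scal_l (V := C_NormedModule) c a l). Qed.

Lemma is_series_C_ext (a b : nat -> C) (l : C) :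
  (forall n, a n = b n) -> is_series a l -> is_series b l.
Proof. exact (is_series_ext a b l). Qed.

Lemma is_series_C_succ (a : nat -> C) (l : C) :
  is_series (fun k => a (S k)) l -> is_series a (a O + l).
Proof.
  intros H. apply is_series_csum in H. apply is_series_csum.
  apply (filterlim_ext_loc (fun n => a O + csum (fun k => a (S k)) (n - 1))).
  - exists 1%nat. intros n Hn. replace n with (S (n - 1)) at 2 by lia. symmetry. apply csum_succ_l.
  - exact (Clim_plus _ _ _ _ (filterlim_const (a O)) (Clim_shift _ _ 1 H)).
Qed.

Lemma is_series_finite (a : nat -> C) N : (forall k, (N <= k)%nat -> a k = 0) -> is_series a (csum a N).
Proof.
  intros H. apply is_series_csum. apply (filterlim_ext_loc (fun _ => csum a N)).
  - exists N. intros n Hn. replace n with (N + (n - N))%nat by lia.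
    rewrite csum_add, (csum_zero (fun i => a (N + i)%nat)) by (intros i _; apply H; lia). ring.
  - apply filterlim_const.
Qed.

Lemma ex_series_C_geometric (a : nat -> C) (K t : R) :
  (0 <= t < 1)%R -> (forall k, (Cmod (a k) <= K * t ^ k)%R) -> exists l : C, is_series a l.
Proof.
  intros Ht Ha. destruct (ex_series_le (V := C_CompleteNormedModule) a (fun k => K * t ^ k)%R) as [l Hl].
  - exact Ha.
  - apply (ex_series_scal_l K (fun k => t ^ k)%R). apply ex_series_geom. rewrite Rabs_pos_eq; lra.
  - exists l. exact Hl.
Qed.

Lemma series_tail_bound (a : nat -> C) (l : C) (K t : R) n :
  (0 <= t < 1)%R -> (forall k, (Cmod (a k) <= K * t ^ k)%R) ->
  is_series a l -> (Cmod (l - csum a n) <= K * t ^ n / (1 - t))%R.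
Proof.
  intros Ht Ha Hl. apply is_series_csum in Hl.
  apply (Clim_norm_le (csum a) l (csum a n) _ n Hl). intros m Hm.
  replace m with (n + (m - n))%nat by lia. rewrite csum_add.
  replace (csum a n + csum (fun i => a (n + i)%nat) (m - n) - csum a n)
    with (csum (fun i => a (n + i)%nat) (m - n)) by ring.
  apply (Cmod_csum_geometric _ (K * t ^ n)%R t); auto.
  intros k. rewrite Rmult_assoc, <- pow_add. apply Ha.
Qed.

(* a junk value when the series diverges *)
Definition Cseries (a : nat -> C) : C := epsilon (inhabits (RtoC 0)) (fun l => is_series a l).

Lemma Cseries_correct (a : nat -> C) : (exists l, is_series a l) -> is_series a (Cseries a).
Proof. apply epsilon_spec. Qed.

Lemma Clim_csum (f : nat -> nat -> C) (g : nat -> C) K :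
  (forall k, Clim (fun N => f N k) (g k)) -> Clim (fun N => csum (f N) K) (csum g K).
Proof.
  intros H. induction K as [|K IH]; simpl.
  - apply filterlim_const.
  - apply Clim_plus; auto.
Qed.

Theorem tannery (f : nat -> nat -> C) (F : nat -> C) (g : nat -> C) (G : C) (K t : R) :
  (0 <= t < 1)%R -> (forall N k, (Cmod (f N k) <= K * t ^ k)%R) ->
  (forall N, is_series (f N) (F N)) -> (forall k, Clim (fun N => f N k) (g k)) ->
  is_series g G -> Clim F G.
Proof.
  intros Ht Hb HF Hg HG. apply Clim_epsilon. intros eps He.
  assert (HK : (0 <= K)%R) by (specialize (Hb O O); pose proof (Cmod_ge_0 (f O O)); simpl in Hb; lra).
  assert (Hgb : forall k, (Cmod (g k) <= K * t ^ k)%R).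
  { intros k. replace (g k) with (g k - 0) by ring.
    apply (Clim_norm_le _ _ _ _ 0 (Hg k)). intros N _.
    replace (f N k - 0) with (f N k) by ring. apply Hb. }
  destruct (pow_lt_1_zero t ltac:(rewrite Rabs_pos_eq; lra) (eps * (1 - t) / (3 * (K + 1)))%R)
    as [K0 HK0].
  { apply Rdiv_lt_0_compat; [apply Rmult_lt_0_compat|]; lra. }
  specialize (HK0 K0 (le_n _)). rewrite Rabs_pos_eq in HK0 by (apply pow_le; lra).
  assert (Htail : (K * t ^ K0 / (1 - t) < eps / 3)%R).
  { apply Rmult_lt_reg_r with ((1 - t) * (K + 1))%R; [nra|].
    apply Rle_lt_trans with (t ^ K0 * (K + 1) * (K + 1))%R.
    - replace (K * t ^ K0 / (1 - t) * ((1 - t) * (K + 1)))%R with (K * t ^ K0 * (K + 1))%R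
        by (field; lra).
      pose proof (pow_le t K0 ltac:(lra)). nra.
    - replace (eps / 3 * ((1 - t) * (K + 1)))%R
        with ((eps * (1 - t) / (3 * (K + 1))) * (K + 1) * (K + 1))%R by (field; lra).
      apply Rmult_lt_compat_r; [lra|]. apply Rmult_lt_compat_r; lra. }
  destruct (proj1 (Clim_epsilon _ _) (Clim_csum f g K0 Hg) (eps / 3)%R ltac:(lra)) as [N1 HN1].
  exists N1. intros N HN.
  pose proof (series_tail_bound (f N) (F N) K t K0 Ht (Hb N) (HF N)) as T1.
  pose proof (series_tail_bound g G K t K0 Ht Hgb HG) as T2.
  specialize (HN1 N HN).
  replace (F N - G) with ((F N - csum (f N) K0) + (csum (f N) K0 - csum g K0) - (G - csum g K0)) by ring.
  eapply Rle_lt_trans; [apply Cmod_triangle|]. rewrite Cmod_opp.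
  eapply Rle_lt_trans; [apply Rplus_le_compat_r, Cmod_triangle|]. lra.
Qed.

(** * q-Pochhammer symbols *)

Lemma qpoch_succ_l (x p : C) n : qpoch x p (S n) = (1 - x) * qpoch (x * p) p n.
Proof. induction n as [|n IH]; [simpl; ring|]. cbn [qpoch] in *. rewrite IH. simpl. ring. Qed.

Lemma qpoch_add (x p : C) n m : qpoch x p (n + m) = qpoch x p n * qpoch (x * Cpow p n) p m.
Proof.
  induction m as [|m IH].
  - rewrite Nat.add_0_r. simpl. ring.
  - rewrite Nat.add_succ_r. cbn [qpoch]. rewrite IH, Cpow_add_r. ring.
Qed.

Lemma qpoch_neq0 (x p : C) n : (forall k, x * Cpow p k <> 1) -> qpoch x p n <> 0.
Proof.
  intros H. induction n as [|n IH]; simpl.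
  - exact C1_nz.
  - apply Cmult_neq_0; auto. intros E. apply (H n).
    replace (x * Cpow p n) with (1 - (1 - x * Cpow p n)) by ring. rewrite E. ring.
Qed.

Section QPochhammerBounds.
Variable p : C.
Hypothesis Hp : (Cmod p < 1)%R.

Definition qpoch_ubound (T : R) : R := exp (T / (1 - Cmod p)).
Definition qpoch_lbound (T : R) : R := exp (- (T / ((1 - T) * (1 - Cmod p)))).

Lemma qpoch_lbound_pos T : (0 < qpoch_lbound T)%R.
Proof. apply exp_pos. Qed.

Lemma Cmod_qpoch_le (x : C) (T : R) n : (Cmod x <= T)%R -> (Cmod (qpoch x p n) <= qpoch_ubound T)%R.
Proof.
  intros Hx. pose proof (Cmod_ge_0 p) as Hp0. pose proof (Cmod_ge_0 x) as Hx0.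
  assert (Hpart : (Cmod (qpoch x p n) <= exp (T * (1 - Cmod p ^ n) / (1 - Cmod p)))%R).
  { induction n as [|n IH]; simpl qpoch.
    - rewrite Cmod_1. replace (T * (1 - Cmod p ^ 0) / (1 - Cmod p))%R with 0%R by (simpl; field; lra).
      rewrite exp_0. lra.
    - replace (T * (1 - Cmod p ^ S n) / (1 - Cmod p))%R
        with (T * (1 - Cmod p ^ n) / (1 - Cmod p) + T * Cmod p ^ n)%R by (simpl; field; lra).
      rewrite Cmod_mult, exp_plus. apply Rmult_le_compat; try apply Cmod_ge_0; auto.
      eapply Rle_trans; [apply Cmod_one_minus_le|]. rewrite Cmod_mult, Cmod_pow.
      pose proof (exp_ineq1_le (T * Cmod p ^ n)). pose proof (pow_le (Cmod p) n Hp0). nra. }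
  eapply Rle_trans; [exact Hpart|]. apply exp_monotone. unfold Rdiv.
  apply Rmult_le_compat_r; [apply Rlt_le, Rinv_0_lt_compat; lra|].
  pose proof (pow_le (Cmod p) n Hp0). nra.
Qed.

Lemma Cmod_qpoch_ge (x : C) (T : R) n :
  (Cmod x <= T)%R -> (T < 1)%R -> (qpoch_lbound T <= Cmod (qpoch x p n))%R.
Proof.
  intros Hx HT. pose proof (Cmod_ge_0 p) as Hp0. pose proof (Cmod_ge_0 x) as Hx0.
  assert (Hpart : (exp (- (T * (1 - Cmod p ^ n) / ((1 - T) * (1 - Cmod p)))) <= Cmod (qpoch x p n))%R).
  { induction n as [|n IH]; simpl qpoch.
    - rewrite Cmod_1. replace (T * (1 - Cmod p ^ 0) / ((1 - T) * (1 - Cmod p)))%R with 0%R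
        by (simpl; field; lra).
      rewrite Ropp_0, exp_0. lra.
    - set (s := (T * Cmod p ^ n)%R).
      assert (Hs : (0 <= s <= T)%R).
      { pose proof (pow_le (Cmod p) n Hp0). pose proof (Cmod_Cpow_le1 p n ltac:(lra)).
        rewrite Cmod_pow in *. unfold s. split; nra. }
      replace (- (T * (1 - Cmod p ^ S n) / ((1 - T) * (1 - Cmod p))))%R
        with (- (T * (1 - Cmod p ^ n) / ((1 - T) * (1 - Cmod p))) + - (s / (1 - T)))%R
        by (unfold s; simpl; field; lra).
      rewrite Cmod_mult, exp_plus. apply Rmult_le_compat; try (left; apply exp_pos); auto.
      apply Rle_trans with (1 - s)%R.
      + eapply Rle_trans; [|apply exp_le_one_minus; lra]. apply exp_monotone.
        apply Ropp_le_contravar. unfold Rdiv. apply Rmult_le_compat_l; [lra|].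
        apply Rinv_le_contravar; lra.
      + eapply Rle_trans; [|apply Cmod_one_minus_ge]. rewrite Cmod_mult, Cmod_pow.
        unfold s. pose proof (pow_le (Cmod p) n Hp0). nra. }
  eapply Rle_trans; [|exact Hpart]. apply exp_monotone. apply Ropp_le_contravar.
  unfold Rdiv. apply Rmult_le_compat_r.
  - apply Rlt_le, Rinv_0_lt_compat. apply Rmult_lt_0_compat; lra.
  - pose proof (pow_le (Cmod p) n Hp0). nra.
Qed.

Lemma qpoch_self_ge n : (qpoch_lbound (Cmod p) <= Cmod (qpoch p p n))%R.
Proof. apply Cmod_qpoch_ge; lra. Qed.

Lemma qpoch_self_neq0 n : qpoch p p n <> 0.
Proof.
  intros E. pose proof (qpoch_self_ge n) as H. rewrite E, Cmod_0 in H.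
  pose proof (qpoch_lbound_pos (Cmod p)). lra.
Qed.

Lemma qpoch_lower_bound (x : C) : (forall k, x * Cpow p k <> 1) ->
  exists e, (0 < e)%R /\ forall n, (e <= Cmod (qpoch x p n))%R.
Proof.
  intros Hk. pose proof (Cmod_ge_0 p) as Hp0. pose proof (Cmod_ge_0 x) as Hx0.
  assert (Hpos : forall n, (0 < Cmod (qpoch x p n))%R)
    by (intros n; apply Cmod_gt_0, qpoch_neq0, Hk).
  destruct (pow_lt_1_zero (Cmod p) ltac:(rewrite Rabs_pos_eq; lra) (/ (2 * (Cmod x + 1)))%R)
    as [K HK].
  { apply Rinv_0_lt_compat. lra. }
  specialize (HK K (le_n _)). rewrite Rabs_pos_eq in HK by (apply pow_le; lra).
  assert (Hy : (Cmod (x * Cpow p K) <= 1 / 2)%R).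
  { rewrite Cmod_mult, Cmod_pow.
    apply Rle_trans with (Cmod x * / (2 * (Cmod x + 1)))%R; [apply Rmult_le_compat_l; lra|].
    apply Rmult_le_reg_r with (2 * (Cmod x + 1))%R; [lra|].
    rewrite Rmult_assoc, Rinv_l by lra. nra. }
  (* the first [K] factors are bounded below by their minimum, the tail uniformly *)
  assert (Hhead : exists e, (0 < e)%R /\ forall n, (n <= K)%nat -> (e <= Cmod (qpoch x p n))%R).
  { clear HK Hy. induction K as [|K [e [He Hen]]].
    - exists 1%R. split; [lra|]. intros n Hn. replace n with 0%nat by lia. simpl. rewrite Cmod_1. lra.
    - exists (Rmin e (Cmod (qpoch x p (S K)))). split; [apply Rmin_pos; auto|].
      intros n Hn. destruct (Nat.eq_dec n (S K)) as [->|]; [apply Rmin_r|].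
      eapply Rle_trans; [apply Rmin_l | apply Hen; lia]. }
  destruct Hhead as [e [He Hen]].
  exists (Rmin e (Cmod (qpoch x p K) * qpoch_lbound (1 / 2))). split.
  { apply Rmin_pos; auto. apply Rmult_lt_0_compat; [apply Hpos | apply qpoch_lbound_pos]. }
  intros n. destruct (le_lt_dec n K).
  - eapply Rle_trans; [apply Rmin_l | auto].
  - eapply Rle_trans; [apply Rmin_r|]. replace n with (K + (n - K))%nat by lia.
    rewrite qpoch_add, Cmod_mult. apply Rmult_le_compat_l; [apply Cmod_ge_0|].
    apply Cmod_qpoch_ge; lra.
Qed.

Lemma qpoch_cvg (x : C) : exists P, Clim (qpoch x p) P.
Proof.
  pose proof (Cmod_ge_0 p) as Hp0. pose proof (Cmod_ge_0 x) as Hx0.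
  set (a := fun k => - (x * Cpow p k) * qpoch x p k).
  destruct (ex_series_C_geometric a (Cmod x * qpoch_ubound (Cmod x)) (Cmod p)) as [L HL]; [lra| |].
  { intros k. unfold a. rewrite Cmod_mult, Cmod_opp, Cmod_mult, Cmod_pow.
    pose proof (Cmod_qpoch_le x (Cmod x) k (Rle_refl _)). pose proof (pow_le (Cmod p) k Hp0).
    replace (Cmod x * qpoch_ubound (Cmod x) * Cmod p ^ k)%R
      with (Cmod x * Cmod p ^ k * qpoch_ubound (Cmod x))%R by ring.
    apply Rmult_le_compat_l; [apply Rmult_le_pos|]; auto. }
  exists (1 + L). apply is_series_csum in HL.
  (* telescoping: (x;p)_n = 1 + sum_{k<n} ((x;p)_{k+1} - (x;p)_k) *)
  apply (filterlim_ext (fun n => 1 + csum a n)).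
  - intros n. induction n as [|n IH]; [simpl; ring|].
    change (1 + (csum a n + a n) = qpoch x p n * (1 - x * Cpow p n)).
    rewrite Cplus_assoc, IH. unfold a. ring.
  - exact (Clim_plus _ _ _ _ (filterlim_const (RtoC 1)) HL).
Qed.

Lemma qpoch_lim_neq0 (x P : C) : (forall k, x * Cpow p k <> 1) -> Clim (qpoch x p) P -> P <> 0.
Proof.
  intros Hk HP E. destruct (qpoch_lower_bound x Hk) as [e [He Hen]].
  pose proof (Clim_norm_ge _ _ _ HP Hen) as H. rewrite E, Cmod_0 in H. lra.
Qed.

End QPochhammerBounds.

Lemma Clim_qpoch_param (y : nat -> C) (p : C) k :
  Clim y 0 -> Clim (fun r => qpoch (y r) p k) 1.
Proof.
  intros Hy. induction k as [|k IH]; simpl.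
  - apply filterlim_const.
  - assert (H : Clim (fun r => 1 - y r * Cpow p k) (1 - 0 * Cpow p k)).
    { apply Clim_plus; [apply filterlim_const|]. apply Clim_opp.
      apply (filterlim_ext (fun r => Cpow p k * y r)); [intros; ring|].
      replace (0 * Cpow p k) with (Cpow p k * 0) by ring. apply Clim_scal, Hy. }
    replace (1 - 0 * Cpow p k) with (RtoC 1) in H by ring.
    pose proof (Clim_mult _ _ _ _ IH H) as Hprod. rewrite Cmult_1_l in Hprod. exact Hprod.
Qed.

(** * Euler's identity *)

Section Euler.
Variable p : C.
Hypothesis Hp : (Cmod p < 1)%R.

Definition euler_term (y : C) (k : nat) : C := Cpow y k / qpoch p p k.

Lemma Cmod_euler_term_le (y : C) k :
  (Cmod (euler_term y k) <= / qpoch_lbound p (Cmod p) * Cmod y ^ k)%R.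
Proof.
  unfold euler_term. rewrite Rmult_comm. apply Cmod_div_le.
  - apply qpoch_lbound_pos.
  - rewrite Cmod_pow. lra.
  - apply qpoch_self_ge, Hp.
Qed.

Lemma ex_series_euler (y : C) : (Cmod y < 1)%R -> exists E, is_series (euler_term y) E.
Proof.
  intros Hy. apply (ex_series_C_geometric _ (/ qpoch_lbound p (Cmod p)) (Cmod y)).
  - split; [apply Cmod_ge_0 | exact Hy].
  - apply Cmod_euler_term_le.
Qed.

Lemma euler_series_succ (y Ey Epy : C) :
  is_series (euler_term y) Ey -> is_series (euler_term (p * y)) Epy -> Ey * (1 - y) = Epy.
Proof.
  intros H1 H2.
  assert (H3 := is_series_C_plus _ _ _ _ H1 (is_series_C_scal (-1) _ _ H2)).
  (* termwise, E(y) - E(py) is y E(y) shifted by one *)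
  assert (H4 : is_series (fun k => euler_term y k + -1 * euler_term (p * y) k) (0 + y * Ey)).
  { replace (RtoC 0) with (euler_term y 0 + -1 * euler_term (p * y) 0)
      by (unfold euler_term; simpl; field).
    apply is_series_C_succ. apply (is_series_C_ext (fun j => y * euler_term y j)).
    - intros j. unfold euler_term. cbn [qpoch]. rewrite !Cpow_S, Cpow_mult_l.
      pose proof (qpoch_self_neq0 p Hp j).
      pose proof (one_minus_neq0 _ (Cmod_Cpow_succ_lt1 p j Hp)). rewrite Cpow_S in H0.
      field. auto.
    - now apply is_series_C_scal. }
  pose proof (is_series_C_unique _ _ _ H3 H4) as E.
  replace Epy with (Ey - (Ey + -1 * Epy)) by ring. rewrite E. ring.
Qed.

Lemma Cmod_Cpow_mul_le (x : C) m : (Cmod (Cpow p m * x) <= Cmod x)%R.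
Proof.
  rewrite Cmod_mult. pose proof (Cmod_Cpow_le1 p m ltac:(lra)).
  pose proof (Cmod_ge_0 (Cpow p m)). pose proof (Cmod_ge_0 x). nra.
Qed.

Lemma is_series_euler_Cpow (x E : C) m :
  (Cmod x < 1)%R -> is_series (euler_term x) E ->
  is_series (euler_term (Cpow p m * x)) (E * qpoch x p m).
Proof.
  intros Hx HE. induction m as [|m IH].
  - rewrite Cmult_1_r. apply (is_series_C_ext (euler_term x)); [|exact HE].
    intros k. simpl. rewrite Cmult_1_l. reflexivity.
  - destruct (ex_series_euler (Cpow p (S m) * x)) as [E' HE'].
    { eapply Rle_lt_trans; [apply Cmod_Cpow_mul_le | exact Hx]. }
    replace (Cpow p (S m) * x) with (p * (Cpow p m * x)) in * by (simpl; ring).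
    replace (E * qpoch x p (S m)) with E'; [exact HE'|].
    rewrite <- (euler_series_succ _ _ _ IH HE'). simpl. ring.
Qed.

Theorem euler_product (x E P : C) :
  (Cmod x < 1)%R -> is_series (euler_term x) E -> Clim (qpoch x p) P -> E * P = 1.
Proof.
  intros Hx HE HP. pose proof (Cmod_ge_0 p) as Hp0. pose proof (Cmod_ge_0 x) as Hx0.
  pose proof (qpoch_lbound_pos p (Cmod p)) as Hlb.
  (* as m grows, only the constant term of E(p^m x) survives *)
  set (delta0 := fun k => match k with O => RtoC 1 | S _ => RtoC 0 end).
  assert (Hdelta0 : is_series delta0 (RtoC 1)).
  { pose proof (is_series_finite delta0 1) as H.
    replace (csum delta0 1) with (RtoC 1) in H by (simpl; ring).
    apply H. intros [|k] Hk; [lia | reflexivity]. }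
  assert (Hlim : Clim (fun m => E * qpoch x p m) (RtoC 1)).
  { apply (tannery (fun m => euler_term (Cpow p m * x)) _ delta0 (RtoC 1)
             (/ qpoch_lbound p (Cmod p)) (Cmod x)); auto using is_series_euler_Cpow.
    - intros N k. eapply Rle_trans; [apply Cmod_euler_term_le|].
      apply Rmult_le_compat_l; [left; apply Rinv_0_lt_compat; exact Hlb|].
      apply pow_incr. split; [apply Cmod_ge_0 | apply Cmod_Cpow_mul_le].
    - intros [|k]; simpl.
      + apply (filterlim_ext (fun _ => RtoC 1)); [|apply filterlim_const].
        intros N. unfold euler_term. simpl. field.
      + apply (Clim_geometric_bound _ (/ qpoch_lbound p (Cmod p)) (Cmod p)); [lra|].
        intros N. eapply Rle_trans; [apply Cmod_euler_term_le|].
        apply Rmult_le_compat_l; [left; apply Rinv_0_lt_compat; exact Hlb|].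
        rewrite Cmod_mult, Cmod_pow. simpl.
        pose proof (pow_le (Cmod p) N Hp0). pose proof (pow_le_one (Cmod p) N ltac:(lra)).
        assert (Hpx : (0 <= Cmod p ^ N * Cmod x <= 1)%R) by nra.
        pose proof (pow_le_one _ k Hpx). nra. }
  exact (Clim_unique _ _ _ (Clim_scal E _ _ HP) Hlim).
Qed.

End Euler.

(** * The q-Gauss sum at denominator parameter p^2 *)

Definition gauss_term (p x u v w : C) (k : nat) : C :=
  qpoch u p k * qpoch v p k * Cpow x k / (qpoch p p k * qpoch w p k).

Section GaussContiguity.
Variables p x u v w : C.
Hypothesis Hp : (Cmod p < 1)%R.
Hypothesis Hx : (Cmod x < 1)%R.
Hypothesis Hxuv : x * u * v = w.
Hypothesis Hw : forall k, w * Cpow p k <> 1.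

(* certificate making the contiguous combination in [gauss_term_contiguity] telescope *)
Definition gauss_certificate (k : nat) : C :=
  match k with
  | O => 0
  | S j => qpoch (u * p) p j * qpoch (v * p) p j * Cpow x (S j) * ((1 - w) * (1 - w * p)) *
           ((u * v + w - u - v) + u * v * (1 - w) * Cpow p (S j)) / (qpoch p p j * qpoch w p (S (S j)))
  end.

Lemma one_minus_w_neq0 k : 1 - w * Cpow p k <> 0.
Proof.
  intros E. apply (Hw k). replace (w * Cpow p k) with (1 - (1 - w * Cpow p k)) by ring.
  rewrite E. ring.
Qed.

Lemma gauss_term_contiguity k :
  (1 - w) * (1 - w * p) * gauss_term p x u v w k
  - (1 - x * v) * (1 - x * u) * gauss_term p x (u * p) (v * p) (w * p * p) k
  = gauss_certificate k - gauss_certificate (S k).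
Proof.
  assert (Hw0 := one_minus_w_neq0 0). assert (Hw1 := one_minus_w_neq0 1).
  simpl Cpow in Hw0, Hw1. rewrite Cmult_1_r in Hw0, Hw1.
  destruct k as [|j]; unfold gauss_term, gauss_certificate.
  - simpl. rewrite <- Hxuv in *. field. auto.
  - assert (E1 : qpoch (w * p * p) p (S j) = qpoch w p (S (S (S j))) / ((1 - w) * (1 - w * p))).
    { rewrite (qpoch_succ_l w), (qpoch_succ_l (w * p)). field. auto. }
    rewrite E1, (qpoch_succ_l u p j), (qpoch_succ_l v p j).
    cbn [qpoch].
    pose proof (qpoch_self_neq0 p Hp j). pose proof (qpoch_neq0 w p j Hw).
    pose proof (one_minus_neq0 _ (Cmod_Cpow_succ_lt1 p j Hp)).
    pose proof (one_minus_w_neq0 j). pose proof (one_minus_w_neq0 (S j)).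
    pose proof (one_minus_w_neq0 (S (S j))).
    rewrite !Cpow_S in *. rewrite <- Hxuv in *.
    field. repeat split; auto.
Qed.

Lemma gauss_certificate_bound : exists K, forall j, (Cmod (gauss_certificate (S j)) <= K * Cmod x ^ j)%R.
Proof.
  destruct (qpoch_lower_bound p Hp w Hw) as [cw [Hcw Hcwn]].
  pose proof (qpoch_lbound_pos p (Cmod p)) as Hc.
  set (Bu := qpoch_ubound p (Cmod (u * p))). set (Bv := qpoch_ubound p (Cmod (v * p))).
  set (M1 := Cmod ((1 - w) * (1 - w * p))).
  set (M2 := (Cmod (u * v + w - u - v) + Cmod (u * v * (1 - w)))%R).
  exists (Bu * Bv * M1 * M2 / (qpoch_lbound p (Cmod p) * cw))%R. intros j.
  unfold gauss_certificate. cbv beta iota.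
  replace (Bu * Bv * M1 * M2 / (qpoch_lbound p (Cmod p) * cw) * Cmod x ^ j)%R
    with ((Bu * Bv * Cmod x ^ j * M1 * M2) / (qpoch_lbound p (Cmod p) * cw))%R by (field; lra).
  pose proof (Cmod_ge_0 x).
  apply Cmod_div_le; [apply Rmult_lt_0_compat; lra| |].
  - rewrite !Cmod_mult.
    assert (A1 : (Cmod (qpoch (u * p) p j) <= Bu)%R) by (apply Cmod_qpoch_le; lra).
    assert (A2 : (Cmod (qpoch (v * p) p j) <= Bv)%R) by (apply Cmod_qpoch_le; lra).
    assert (A3 : (Cmod (Cpow x (S j)) <= Cmod x ^ j)%R).
    { rewrite Cmod_pow. simpl. pose proof (pow_le (Cmod x) j H). nra. }
    assert (A4 : (Cmod (u * v + w - u - v + u * v * (1 - w) * Cpow p (S j)) <= M2)%R).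
    { eapply Rle_trans; [apply Cmod_triangle|]. rewrite (Cmod_mult (u * v * (1 - w))).
      pose proof (Cmod_Cpow_le1 p (S j) ltac:(lra)). pose proof (Cmod_ge_0 (u * v * (1 - w))).
      unfold M2. nra. }
    assert (A5 : (Cmod (1 - w) * Cmod (1 - w * p) <= M1)%R) by (unfold M1; rewrite Cmod_mult; lra).
    repeat apply Rmult_le_compat; try apply Cmod_ge_0; auto;
      repeat apply Rmult_le_pos; try apply Cmod_ge_0.
  - rewrite Cmod_mult. apply Rmult_le_compat; try lra; [apply qpoch_self_ge, Hp | apply Hcwn].
Qed.

Theorem gauss_contiguity (D1 D2 : C) :
  is_series (gauss_term p x u v w) D1 -> is_series (gauss_term p x (u * p) (v * p) (w * p * p)) D2 ->
  (1 - w) * (1 - w * p) * D1 = (1 - x * v) * (1 - x * u) * D2.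
Proof.
  intros H1 H2.
  assert (H3 := is_series_C_plus _ _ _ _ (is_series_C_scal ((1 - w) * (1 - w * p)) _ _ H1)
                  (is_series_C_scal (- ((1 - x * v) * (1 - x * u))) _ _ H2)).
  assert (H4 : is_series (fun n => (1 - w) * (1 - w * p) * gauss_term p x u v w n +
                 - ((1 - x * v) * (1 - x * u)) * gauss_term p x (u * p) (v * p) (w * p * p) n) (RtoC 0)).
  { apply is_series_csum.
    apply (filterlim_ext (fun n => - gauss_certificate n)).
    - intros n. rewrite (csum_ext _ (fun k => gauss_certificate k - gauss_certificate (S k))).
      + rewrite csum_telescope. simpl. ring.
      + intros k _. rewrite <- gauss_term_contiguity. ring.
    - replace (RtoC 0) with (- 0) by ring. apply Clim_opp.
      destruct gauss_certificate_bound as [K HK].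
      apply (filterlim_ext_loc (fun n => gauss_certificate (S (n - 1)))).
      { exists 1%nat. intros n Hn. f_equal. lia. }
      apply (Clim_shift (fun n => gauss_certificate (S n)) 0 1).
      apply (Clim_geometric_bound _ K (Cmod x)); [split; [apply Cmod_ge_0 | exact Hx]|].
      exact HK. }
  pose proof (is_series_C_unique _ _ _ H3 H4) as E.
  replace ((1 - w) * (1 - w * p) * D1) with
    ((1 - w) * (1 - w * p) * D1 + - ((1 - x * v) * (1 - x * u)) * D2 + (1 - x * v) * (1 - x * u) * D2)
    by ring.
  rewrite E. ring.
Qed.

End GaussContiguity.

Section GaussFamily.
Variables p x r1 r2 : C.
Hypothesis Hp : (Cmod p < 1)%R.
Hypothesis Hx : (Cmod x < 1)%R.
Hypothesis Hxr : x * r1 * r2 = p * p.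

Let w (r : nat) : C := p * p * Cpow p (2 * r).

(* the terms of D_r; note that w r = x (r1 p^r) (r2 p^r) *)
Definition gauss_family (r k : nat) : C := gauss_term p x (r1 * Cpow p r) (r2 * Cpow p r) (w r) k.

Lemma Cmod_w_le r : (Cmod (w r) <= Cmod p * Cmod p)%R.
Proof.
  unfold w. rewrite !Cmod_mult. pose proof (Cmod_Cpow_le1 p (2 * r) ltac:(lra)).
  pose proof (Cmod_ge_0 p). pose proof (Cmod_ge_0 (Cpow p (2 * r))). nra.
Qed.

Lemma Cmod_p_sq_lt1 : (Cmod p * Cmod p < 1)%R.
Proof. pose proof (Cmod_ge_0 p). nra. Qed.

Lemma w_Cpow_neq1 r k : w r * Cpow p k <> 1.
Proof.
  intros E. apply (f_equal Cmod) in E. rewrite Cmod_mult, Cmod_1 in E.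
  pose proof (Cmod_w_le r). pose proof (Cmod_Cpow_le1 p k ltac:(lra)). pose proof Cmod_p_sq_lt1.
  pose proof (Cmod_ge_0 (w r)). pose proof (Cmod_ge_0 (Cpow p k)). nra.
Qed.

Lemma gauss_family_bound : exists K, forall r k, (Cmod (gauss_family r k) <= K * Cmod x ^ k)%R.
Proof.
  set (lb := (qpoch_lbound p (Cmod p) * qpoch_lbound p (Cmod p * Cmod p))%R).
  assert (Hlb : (0 < lb)%R) by (apply Rmult_lt_0_compat; apply qpoch_lbound_pos).
  exists (qpoch_ubound p (Cmod r1) * qpoch_ubound p (Cmod r2) / lb)%R. intros r k.
  replace (qpoch_ubound p (Cmod r1) * qpoch_ubound p (Cmod r2) / lb * Cmod x ^ k)%R
    with (qpoch_ubound p (Cmod r1) * qpoch_ubound p (Cmod r2) * Cmod x ^ k / lb)%R by (field; lra).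
  unfold gauss_family, gauss_term. apply Cmod_div_le; auto.
  - assert (Hr : forall z, (Cmod (z * Cpow p r) <= Cmod z)%R).
    { intros z. rewrite Cmod_mult. pose proof (Cmod_Cpow_le1 p r ltac:(lra)).
      pose proof (Cmod_ge_0 z). pose proof (Cmod_ge_0 (Cpow p r)). nra. }
    rewrite !Cmod_mult, Cmod_pow.
    apply Rmult_le_compat; try apply pow_le; try apply Rmult_le_pos; try apply Cmod_ge_0; [|lra].
    apply Rmult_le_compat; try apply Cmod_ge_0; apply Cmod_qpoch_le; auto.
  - rewrite Cmod_mult. unfold lb. apply Rmult_le_compat; try (left; apply qpoch_lbound_pos).
    + apply qpoch_self_ge, Hp.
    + apply Cmod_qpoch_ge; [exact Hp | apply Cmod_w_le | apply Cmod_p_sq_lt1].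
Qed.

Definition gauss_value (r : nat) : C := Cseries (gauss_family r).

Lemma is_series_gauss_family r : is_series (gauss_family r) (gauss_value r).
Proof.
  apply Cseries_correct. destruct gauss_family_bound as [K HK].
  apply (ex_series_C_geometric _ K (Cmod x)); [split; [apply Cmod_ge_0 | exact Hx] | apply HK].
Qed.

Lemma gauss_value_succ r :
  (1 - w r) * (1 - w r * p) * gauss_value r
  = (1 - x * r2 * Cpow p r) * (1 - x * r1 * Cpow p r) * gauss_value (S r).
Proof.
  replace (x * r2 * Cpow p r) with (x * (r2 * Cpow p r)) by ring.
  replace (x * r1 * Cpow p r) with (x * (r1 * Cpow p r)) by ring.
  apply (gauss_contiguity p x (r1 * Cpow p r) (r2 * Cpow p r) (w r) Hp Hx).
  - unfold w. replace (2 * r)%nat with (r + r)%nat by lia. rewrite Cpow_add_r.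
    rewrite <- Hxr. ring.
  - apply w_Cpow_neq1.
  - apply is_series_gauss_family.
  - apply (is_series_C_ext (gauss_family (S r))); [|apply is_series_gauss_family].
    intros k. unfold gauss_family, w. replace (2 * S r)%nat with (S (S (2 * r))) by lia.
    simpl. f_equal; ring.
Qed.

Lemma gauss_value_closed r :
  gauss_value r * qpoch (x * r2) p r * qpoch (x * r1) p r * (1 - p)
  = gauss_value 0 * qpoch p p (S (2 * r)).
Proof.
  induction r as [|r IH]; [simpl; ring|].
  replace (2 * S r)%nat with (S (S (2 * r))) by lia. cbn [qpoch].
  transitivity ((1 - x * r2 * Cpow p r) * (1 - x * r1 * Cpow p r) * gauss_value (S r)
                * (qpoch (x * r2) p r * qpoch (x * r1) p r * (1 - p))); [ring|].
  rewrite <- gauss_value_succ.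
  transitivity ((1 - w r) * (1 - w r * p)
                * (gauss_value r * qpoch (x * r2) p r * qpoch (x * r1) p r * (1 - p))); [ring|].
  rewrite IH. unfold w. rewrite !Cpow_S. cbn [qpoch]. ring.
Qed.

Lemma Clim_gauss_family k : Clim (fun r => gauss_family r k) (euler_term p x k).
Proof.
  assert (Hw : Clim w 0).
  { apply (filterlim_ext (fun r => p * p * Cpow (Cpow p 2) r)).
    - intros r. unfold w. rewrite <- Cpow_mult_r. reflexivity.
    - apply Clim_Cpow_scaled, Cmod_Cpow_succ_lt1, Hp. }
  pose proof (qpoch_self_neq0 p Hp k) as Hk.
  unfold gauss_family, gauss_term, euler_term, Cdiv.
  replace (Cpow x k * / qpoch p p k) with ((1 * 1 * Cpow x k) * / (qpoch p p k * 1)) by (field; auto).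
  apply Clim_mult.
  - apply Clim_mult; [apply Clim_mult|apply filterlim_const];
      apply Clim_qpoch_param, Clim_Cpow_scaled, Hp.
  - apply (Clim_inv _ _ (qpoch_lbound p (Cmod p) * qpoch_lbound p (Cmod p * Cmod p))).
    + apply Rmult_lt_0_compat; apply qpoch_lbound_pos.
    + intros r. rewrite Cmod_mult. apply Rmult_le_compat; try (left; apply qpoch_lbound_pos).
      * apply qpoch_self_ge, Hp.
      * apply Cmod_qpoch_ge; [exact Hp | apply Cmod_w_le | apply Cmod_p_sq_lt1].
    + apply Clim_scal, Clim_qpoch_param, Hw.
Qed.

Lemma Clim_gauss_value : Clim gauss_value (Cseries (euler_term p x)).
Proof.
  destruct gauss_family_bound as [K HK].
  apply (tannery gauss_family gauss_value (euler_term p x) _ K (Cmod x)).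
  - split; [apply Cmod_ge_0 | exact Hx].
  - exact HK.
  - apply is_series_gauss_family.
  - apply Clim_gauss_family.
  - apply Cseries_correct, ex_series_euler; assumption.
Qed.

Lemma gauss_value_limit (P1 P3 P4 : C) :
  Clim (qpoch p p) P1 -> Clim (qpoch (x * r2) p) P3 -> Clim (qpoch (x * r1) p) P4 ->
  Cseries (euler_term p x) * P3 * P4 * (1 - p) = gauss_value 0 * P1.
Proof.
  intros H1 H3 H4.
  apply (Clim_unique (fun r => gauss_value r * qpoch (x * r2) p r * qpoch (x * r1) p r * (1 - p))).
  - apply Clim_mult; [|apply filterlim_const].
    apply Clim_mult; [apply Clim_mult|]; [apply Clim_gauss_value | exact H3 | exact H4].
  - apply (filterlim_ext (fun r => gauss_value 0 * qpoch p p (S (2 * r)))).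
    + intros r. symmetry. apply gauss_value_closed.
    + apply Clim_scal, (Clim_subseq (qpoch p p) P1 (fun r => S (2 * r))); [intros; lia | exact H1].
Qed.

(* with P1 = (p;p)_oo = (1 - p) (p^2;p)_oo this is the q-Gauss sum
   D_0 = (x r1, x r2; p)_oo / ((x, p^2; p)_oo) *)
Theorem q_gauss_sum (P1 P2 P3 P4 : C) :
  Clim (qpoch p p) P1 -> Clim (qpoch x p) P2 ->
  Clim (qpoch (x * r2) p) P3 -> Clim (qpoch (x * r1) p) P4 ->
  gauss_value 0 * (P1 * P2) = (1 - p) * (P3 * P4).
Proof.
  intros H1 H2 H3 H4.
  assert (HE := Cseries_correct _ (ex_series_euler p Hp x Hx)).
  pose proof (euler_product p Hp x _ P2 Hx HE H2) as Heuler.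
  rewrite Cmult_assoc, <- (gauss_value_limit P1 P3 P4 H1 H3 H4).
  transitivity ((1 - p) * (P3 * P4) * (Cseries (euler_term p x) * P2)); [ring|].
  rewrite Heuler. ring.
Qed.

End GaussFamily.

(** * A Bailey pair *)

Definition sgn (k : nat) : C := Cpow (Copp 1) k.

Lemma sgn_succ k : sgn (S k) = - sgn k.
Proof. unfold sgn. simpl. ring. Qed.

Lemma sgn_add a b : sgn (a + b) = sgn a * sgn b.
Proof. apply Cpow_add_r. Qed.

Lemma sgn_sq k : sgn k * sgn k = 1.
Proof.
  induction k as [|k IH]; [unfold sgn; simpl; ring|].
  rewrite sgn_succ. replace (- sgn k * - sgn k) with (sgn k * sgn k) by ring. exact IH.
Qed.

Section BaileyPair.
Variable q : C.
Hypothesis Hq : (Cmod q < 1)%R.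
Let p := Cpow q 2.
Let Hp : (Cmod p < 1)%R := Cmod_Cpow_succ_lt1 q 1 Hq.

Lemma Cpow_p k : Cpow p k = Cpow q (2 * k).
Proof. unfold p. rewrite Cpow_mult_r. reflexivity. Qed.

Lemma qpoch_p_succ n : qpoch p p (S n) = qpoch p p n * (1 - Cpow q (2 * n + 2)).
Proof. cbn [qpoch]. rewrite <- Cpow_S, Cpow_p. do 3 f_equal. lia. Qed.

Lemma one_minus_Cpow_q_neq0 k : 1 - Cpow q (S k) <> 0.
Proof. apply one_minus_neq0, Cmod_Cpow_succ_lt1, Hq. Qed.

Lemma one_plus_Cpow_q_neq0 k : 1 + Cpow q (S k) <> 0.
Proof. apply one_plus_neq0, Cmod_Cpow_succ_lt1, Hq. Qed.

Lemma one_minus_Cpow_p_neq0 k : 1 - Cpow p (S k) <> 0.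
Proof. apply one_minus_neq0, Cmod_Cpow_succ_lt1, Hp. Qed.

Definition bailey_column_term (m d i : nat) : C :=
  (1 - Cpow q (2 * (m + i) + 1)) * Cpow q ((m + i) * (m + i) - m * m)
  / (qpoch p p (d - i) * qpoch p p (S (2 * m + d + i))).

Lemma bailey_column_term_succ m d i :
  bailey_column_term m (S d) (S i) = Cpow q (2 * m + 1) * bailey_column_term (S m) d i.
Proof.
  unfold bailey_column_term.
  replace (2 * (m + S i) + 1)%nat with (2 * (S m + i) + 1)%nat by lia.
  replace ((m + S i) * (m + S i) - m * m)%nat
    with ((2 * m + 1) + ((S m + i) * (S m + i) - S m * S m))%nat by nia.
  replace (S d - S i)%nat with (d - i)%nat by lia.
  replace (S (2 * m + S d + S i)) with (S (2 * S m + d + i)) by lia.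
  rewrite (Cpow_add_r q (2 * m + 1)). unfold Cdiv. ring.
Qed.

Lemma bailey_column_sum m d :
  csum (bailey_column_term m d) (S d)
  = / ((1 + Cpow q (2 * (m + d) + 1)) * qpoch p p d * qpoch p p (2 * m + d)).
Proof.
  revert m. induction d as [|d IH]; intros m.
  - cbn [csum]. unfold bailey_column_term. rewrite !Nat.add_0_r, !Nat.sub_diag, qpoch_p_succ.
    change (qpoch p p 0) with (RtoC 1). change (Cpow q 0) with (RtoC 1).
    replace (2 * (2 * m) + 2)%nat with ((2 * m + 1) + (2 * m + 1))%nat by lia.
    rewrite (Cpow_add_r q (2 * m + 1) (2 * m + 1)). set (A := Cpow q (2 * m + 1)).
    pose proof (qpoch_self_neq0 p Hp (2 * m)).
    assert (1 + A <> 0) by (unfold A; rewrite Nat.add_1_r; apply one_plus_Cpow_q_neq0).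
    assert (1 - A <> 0) by (unfold A; rewrite Nat.add_1_r; apply one_minus_Cpow_q_neq0).
    replace (1 - A * A) with ((1 - A) * (1 + A)) by ring.
    field. repeat split; auto.
  - rewrite csum_succ_l, (csum_ext _ (fun i => Cpow q (2 * m + 1) * bailey_column_term (S m) d i))
      by (intros; apply bailey_column_term_succ).
    rewrite csum_scal, IH. unfold bailey_column_term.
    rewrite !Nat.add_0_r, Nat.sub_diag, Nat.sub_0_r.
    replace (2 * S m + d)%nat with (S (2 * m + S d)) by lia.
    rewrite !qpoch_p_succ. set (X := qpoch p p (2 * m + S d)). set (Y := qpoch p p d).
    replace (2 * (2 * m + S d) + 2)%nat with ((2 * m + 1) + (2 * m + 1) + (2 * d + 2))%nat by lia.
    replace (2 * (m + S d) + 1)%nat with ((2 * m + 1) + (2 * d + 2))%nat by lia.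
    replace (2 * (S m + d) + 1)%nat with ((2 * m + 1) + (2 * d + 2))%nat by lia.
    rewrite (Cpow_add_r q (2 * m + 1 + (2 * m + 1))), (Cpow_add_r q (2 * m + 1) (2 * m + 1)),
      (Cpow_add_r q (2 * m + 1) (2 * d + 2)).
    change (Cpow q 0) with (RtoC 1).
    set (A := Cpow q (2 * m + 1)). set (B := Cpow q (2 * d + 2)).
    assert (HX : X <> 0) by apply qpoch_self_neq0, Hp.
    assert (HY : Y <> 0) by apply qpoch_self_neq0, Hp.
    assert (1 + A * B <> 0).
    { unfold A, B. rewrite <- Cpow_add_r.
      replace (2 * m + 1 + (2 * d + 2))%nat with (S (2 * m + 2 * d + 2)) by lia.
      apply one_plus_Cpow_q_neq0. }
    assert (1 - B <> 0) by (unfold B; rewrite Nat.add_succ_r; apply one_minus_Cpow_q_neq0).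
    assert (1 - A * A * B <> 0).
    { unfold A, B. rewrite <- !Cpow_add_r.
      replace (2 * m + 1 + (2 * m + 1) + (2 * d + 2))%nat with (S (4 * m + 2 * d + 3)) by lia.
      apply one_minus_Cpow_q_neq0. }
    field. repeat split; auto.
Qed.

Definition alt_qbinomial_term (M i : nat) : C := sgn i / (qpoch p p i * qpoch p p (M - i)).

(* the right-hand side was found by creative telescoping *)
Lemma alt_qbinomial_partial k e :
  (1 - Cpow p (k + e + 2)) * csum (alt_qbinomial_term (k + e + 2)) (S (S k))
  - csum (alt_qbinomial_term (k + e)) (S k)
  = sgn (S k) / (qpoch p p e * qpoch p p (S k)).
Proof.
  revert e. induction k as [|k IH]; intros e.
  - cbn [csum]. unfold alt_qbinomial_term. rewrite !Nat.add_0_l.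
    replace (e + 2 - 0)%nat with (S (S e)) by lia. replace (e + 2 - 1)%nat with (S e) by lia.
    rewrite Nat.sub_0_r. replace (e + 2)%nat with (S (S e)) by lia.
    cbn [qpoch]. unfold sgn. simpl Cpow.
    pose proof (qpoch_self_neq0 p Hp e). pose proof (one_minus_Cpow_p_neq0 e).
    pose proof (one_minus_Cpow_p_neq0 (S e)). pose proof (one_minus_Cpow_p_neq0 0).
    rewrite !Cpow_S in *. simpl Cpow in *. rewrite !Cmult_1_r in *.
    field. repeat split; auto.
  - specialize (IH (S e)). replace (S k + e)%nat with (k + S e)%nat by lia.
    change (csum ?f (S (S (S k)))) with (csum f (S (S k)) + f (S (S k))).
    change (csum ?f (S (S k))) with (csum f (S k) + f (S k)) at 2.
    match goal with |- ?L = _ => replace L with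
      (((1 - Cpow p (k + S e + 2)) * csum (alt_qbinomial_term (k + S e + 2)) (S (S k))
        - csum (alt_qbinomial_term (k + S e)) (S k))
       + ((1 - Cpow p (k + S e + 2)) * alt_qbinomial_term (k + S e + 2) (S (S k))
          - alt_qbinomial_term (k + S e) (S k))) by ring end.
    rewrite IH. unfold alt_qbinomial_term.
    replace (k + S e + 2 - S (S k))%nat with (S e) by lia.
    replace (k + S e - S k)%nat with e by lia.
    replace (k + S e + 2)%nat with (S (S k) + S e)%nat by lia.
    rewrite Cpow_add_r. cbn [qpoch].
    pose proof (qpoch_self_neq0 p Hp e). pose proof (qpoch_self_neq0 p Hp k).
    pose proof (one_minus_Cpow_p_neq0 e). pose proof (one_minus_Cpow_p_neq0 k).
    pose proof (one_minus_Cpow_p_neq0 (S k)).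
    assert (1 - Cpow p (S (S k)) * Cpow p (S e) <> 0)
      by (rewrite <- Cpow_add_r; apply one_minus_Cpow_p_neq0).
    rewrite !sgn_succ. rewrite !Cpow_S in *.
    field. repeat split; auto.
Qed.

Lemma alt_qbinomial_step M :
  (1 - Cpow p (M + 2)) * csum (alt_qbinomial_term (M + 2)) (M + 3)
  = csum (alt_qbinomial_term M) (S M).
Proof.
  pose proof (alt_qbinomial_partial M 0) as H. rewrite !Nat.add_0_r in H.
  replace (M + 3)%nat with (S (S (S M))) by lia.
  change (csum ?f (S (S (S M)))) with (csum f (S (S M)) + f (S (S M))).
  set (s := csum (alt_qbinomial_term (M + 2)) (S (S M))) in *.
  set (s0 := csum (alt_qbinomial_term M) (S M)) in *.
  transitivity (((1 - Cpow p (M + 2)) * s - s0) + s0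
                + (1 - Cpow p (M + 2)) * alt_qbinomial_term (M + 2) (S (S M))); [ring|].
  rewrite H. unfold alt_qbinomial_term. replace (M + 2 - S (S M))%nat with 0%nat by lia.
  replace (M + 2)%nat with (S (S M)) by lia.
  change (qpoch p p (S (S M))) with (qpoch p p (S M) * (1 - p * Cpow p (S M))).
  pose proof (qpoch_self_neq0 p Hp (S M)). pose proof (one_minus_Cpow_p_neq0 (S M)).
  rewrite Cpow_S in *. rewrite !sgn_succ. change (qpoch p p 0) with (RtoC 1).
  field. split; auto.
Qed.

Lemma alt_qbinomial_even n :
  csum (alt_qbinomial_term (2 * n)) (S (2 * n)) * qpoch (Cpow q 4) (Cpow q 4) n = 1.
Proof.
  induction n as [|n IH].
  - unfold alt_qbinomial_term, sgn. simpl. field.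
  - rewrite <- IH, <- (alt_qbinomial_step (2 * n)).
    replace (2 * S n)%nat with (2 * n + 2)%nat by lia.
    replace (S (2 * n + 2)) with (2 * n + 3)%nat by lia.
    cbn [qpoch]. replace (Cpow q 4 * Cpow (Cpow q 4) n) with (Cpow p (2 * n + 2)); [ring|].
    rewrite Cpow_p, <- !Cpow_mult_r, <- Cpow_add_r. f_equal. lia.
Qed.

Definition bailey_weight (n r : nat) : C := / (qpoch p p (n - r) * qpoch p p (S (n + r))).

Definition bailey_alpha (r : nat) : C := (1 - Cpow q (2 * r + 1)) * inner_sum q r.

Definition zdist (k n : nat) : nat := Z.abs_nat (Z.of_nat k - Z.of_nat n).

(* the summand of [inner_sum q r] with index j = k - n, extended by zero to |j| <= n *)
Definition inner_term (n r k : nat) : C :=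
  if Nat.leb (zdist k n) r then sgn (zdist k n) * Cpow q (r * r - zdist k n * zdist k n) else 0.

Lemma inner_sum_padded n r : (r <= n)%nat -> inner_sum q r = csum (inner_term n r) (S (2 * n)).
Proof.
  intros Hrn. unfold inner_sum.
  change (sum_n_m ?F 0 (2 * r)) with (sum_n F (2 * r)). rewrite sum_n_csum.
  replace (S (2 * n)) with ((n - r) + (S (2 * r) + (n - r)))%nat by lia.
  rewrite !csum_add, (csum_zero (inner_term n r)),
    (csum_zero (fun i => inner_term n r (n - r + (S (2 * r) + i)))).
  2, 3: intros i Hi; unfold inner_term;
    match goal with |- context [Nat.leb ?a ?b] => destruct (Nat.leb_spec a b) end;
    unfold zdist in *; [lia | reflexivity].
  rewrite Cplus_0_l, Cplus_0_r. apply csum_ext. intros i Hi.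
  unfold inner_term, zdist, sgn.
  replace (Z.of_nat (n - r + i) - Z.of_nat n)%Z with (Z.of_nat i - Z.of_nat r)%Z by lia.
  destruct (Nat.leb_spec (Z.abs_nat (Z.of_nat i - Z.of_nat r)) r); [|lia].
  do 2 f_equal. apply Nat2Z.inj. rewrite Z2Nat.id by nia.
  rewrite Nat2Z.inj_sub, !Nat2Z.inj_mul, Zabs2Nat.id_abs, Z.abs_square by nia. reflexivity.
Qed.

Lemma bailey_column n k : (k <= 2 * n)%nat ->
  csum (fun r => bailey_weight n r * (1 - Cpow q (2 * r + 1)) * inner_term n r k) (S n) =
  sgn (zdist k n) / ((1 + Cpow q (2 * n + 1)) * qpoch p p (n - zdist k n) * qpoch p p (n + zdist k n)).
Proof.
  intros Hk. set (j := zdist k n). assert (Hj : (j <= n)%nat) by (unfold j, zdist; lia).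
  set (d := (n - j)%nat). replace (S n) with (j + S d)%nat by lia.
  rewrite csum_add, csum_zero, Cplus_0_l.
  2:{ intros i Hi. unfold inner_term. fold j. destruct (Nat.leb_spec j i); [lia | ring]. }
  rewrite (csum_ext _ (fun i => sgn j * bailey_column_term j d i)).
  2:{ intros i Hi. unfold inner_term, bailey_weight, bailey_column_term. fold j.
      destruct (Nat.leb_spec j (j + i)); [|lia].
      replace (n - (j + i))%nat with (d - i)%nat by lia.
      replace (S (n + (j + i))) with (S (2 * j + d + i)) by lia.
      unfold Cdiv. ring. }
  rewrite csum_scal, bailey_column_sum.
  replace (2 * (j + d) + 1)%nat with (2 * n + 1)%nat by lia.
  replace (2 * j + d)%nat with (n + j)%nat by lia.
  unfold Cdiv. ring.
Qed.

Lemma bailey_column_alt n k : (k <= 2 * n)%nat ->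
  sgn (zdist k n) / (qpoch p p (n - zdist k n) * qpoch p p (n + zdist k n))
  = sgn n * alt_qbinomial_term (2 * n) k.
Proof.
  intros Hk. unfold alt_qbinomial_term, zdist.
  pose proof (qpoch_self_neq0 p Hp k). pose proof (qpoch_self_neq0 p Hp (2 * n - k)).
  destruct (le_lt_dec k n) as [Hkn|Hkn].
  - replace (Z.abs_nat (Z.of_nat k - Z.of_nat n)) with (n - k)%nat by lia.
    replace (n - (n - k))%nat with k by lia. replace (n + (n - k))%nat with (2 * n - k)%nat by lia.
    replace (sgn n) with (sgn (n - k) * sgn k) by (rewrite <- sgn_add; f_equal; lia).
    transitivity (sgn (n - k) * (sgn k * sgn k) / (qpoch p p k * qpoch p p (2 * n - k))).
    + rewrite sgn_sq. field. auto.
    + field. auto.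
  - replace (Z.abs_nat (Z.of_nat k - Z.of_nat n)) with (k - n)%nat by lia.
    replace (n - (k - n))%nat with (2 * n - k)%nat by lia. replace (n + (k - n))%nat with k by lia.
    replace (sgn k) with (sgn n * sgn (k - n)) by (rewrite <- sgn_add; f_equal; lia).
    transitivity ((sgn n * sgn n) * sgn (k - n) / (qpoch p p (2 * n - k) * qpoch p p k)).
    + rewrite sgn_sq. field. auto.
    + field. auto.
Qed.

Theorem bailey_pair n :
  csum (fun r => bailey_alpha r * bailey_weight n r) (S n)
  = sgn n / ((1 + Cpow q (2 * n + 1)) * qpoch (Cpow q 4) (Cpow q 4) n).
Proof.
  set (B := Cpow q (2 * n + 1)).
  assert (HB : 1 + B <> 0).
  { apply one_plus_neq0. unfold B. rewrite Nat.add_1_r. apply Cmod_Cpow_succ_lt1, Hq. }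
  pose proof (alt_qbinomial_even n) as G.
  assert (Q : qpoch (Cpow q 4) (Cpow q 4) n <> 0).
  { intros E. rewrite E, Cmult_0_r in G. apply C1_nz. rewrite <- G. reflexivity. }
  rewrite (csum_ext _ (fun r => csum (fun k =>
             bailey_weight n r * (1 - Cpow q (2 * r + 1)) * inner_term n r k) (S (2 * n)))).
  2:{ intros r Hr. unfold bailey_alpha. rewrite (inner_sum_padded n r) by lia.
      rewrite Cmult_comm, Cmult_assoc, <- csum_scal. apply csum_ext. intros k _. ring. }
  rewrite csum_swap, (csum_ext _ (fun k => sgn n / (1 + B) * alt_qbinomial_term (2 * n) k)).
  2:{ intros k Hk. rewrite bailey_column by lia. fold B.
      replace (sgn n / (1 + B) * alt_qbinomial_term (2 * n) k)
        with ((sgn n * alt_qbinomial_term (2 * n) k) / (1 + B)) by (field; auto).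
      rewrite <- (bailey_column_alt n k) by lia. field.
      split; [|split]; auto; apply qpoch_self_neq0, Hp. }
  rewrite csum_scal.
  replace (csum (alt_qbinomial_term (2 * n)) (S (2 * n))) with (/ qpoch (Cpow q 4) (Cpow q 4) n).
  - field. auto.
  - rewrite <- (Cmult_1_l (/ _)), <- G. field. auto.
Qed.

Lemma Cmod_inner_sum_le r : (Cmod (inner_sum q r) <= INR (S (2 * r)))%R.
Proof.
  unfold inner_sum. change (sum_n_m ?F 0 (2 * r)) with (sum_n F (2 * r)). rewrite sum_n_csum.
  generalize (S (2 * r)). intros N. induction N as [|N IH]; simpl csum.
  - rewrite Cmod_0. simpl. lra.
  - rewrite S_INR. eapply Rle_trans; [apply Cmod_triangle|]. apply Rplus_le_compat; [exact IH|].
    rewrite Cmod_mult, !Cmod_pow, Cmod_opp, Cmod_1, pow1, Rmult_1_l.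
    apply pow_le_one. pose proof (Cmod_ge_0 q). lra.
Qed.

Lemma Cmod_bailey_alpha_le r : (Cmod (bailey_alpha r) <= 4 * INR (S r))%R.
Proof.
  unfold bailey_alpha. rewrite Cmod_mult.
  assert (A : (Cmod (1 - Cpow q (2 * r + 1)) <= 2)%R).
  { eapply Rle_trans; [apply Cmod_one_minus_le|].
    pose proof (Cmod_Cpow_le1 q (2 * r + 1) ltac:(lra)). lra. }
  pose proof (Cmod_inner_sum_le r) as B. rewrite !S_INR, mult_INR in *. simpl (INR 2) in B.
  apply Rle_trans with (2 * (2 * INR r + 1))%R; [|pose proof (pos_INR r); lra].
  apply Rmult_le_compat; try apply Cmod_ge_0; auto.
Qed.

End BaileyPair.

(** * Interchanging the summations *)

Section BaileyLemma.
Variables q a c : C.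
Hypothesis Hq : (Cmod q < 1)%R.
Hypothesis Ha : a <> 0.
Hypothesis Hc : c <> 0.
Hypothesis Hx : (Cmod (a * c) < 1)%R.

Let p := Cpow q 2.
Let x := a * c.
Let r1 := p / a.
Let r2 := p / c.
Let Hp : (Cmod p < 1)%R := Cmod_Cpow_succ_lt1 q 1 Hq.
Let Hx' : (Cmod x < 1)%R := Hx.

Lemma x_r1_r2 : x * r1 * r2 = p * p.
Proof. unfold x, r1, r2. field. split; auto. Qed.

Definition bailey_gamma (n : nat) : C := qpoch r1 p n * qpoch r2 p n * Cpow x n.

Definition bailey_delta (r : nat) : C :=
  bailey_gamma r / qpoch p p (S (2 * r)) * gauss_value p x r1 r2 r.

Lemma is_series_bailey_delta r :
  is_series (fun k => bailey_gamma (r + k) * bailey_weight q (r + k) r) (bailey_delta r).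
Proof.
  apply (is_series_C_ext (fun k => bailey_gamma r / qpoch p p (S (2 * r)) * gauss_family p x r1 r2 r k)).
  - intros k. unfold bailey_gamma, bailey_weight, gauss_family, gauss_term.
    replace (r + k - r)%nat with k by lia. replace (S (r + k + r)) with (S (2 * r) + k)%nat by lia.
    rewrite !qpoch_add, Cpow_add_r. fold p.
    replace (p * Cpow p (S (2 * r))) with (p * p * Cpow p (2 * r)) by (simpl; ring).
    pose proof (qpoch_self_neq0 p Hp k). pose proof (qpoch_self_neq0 p Hp (S (2 * r))).
    pose proof (qpoch_neq0 _ p k (w_Cpow_neq1 p Hp r)).
    field. repeat split; auto.
  - apply is_series_C_scal, is_series_gauss_family; assumption.
Qed.

Definition rhs_term (n : nat) : C :=
  bailey_gamma n * csum (fun r => bailey_alpha q r * bailey_weight q n r) (S n).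

(* rows r of the interchanged double sum, truncated to n < N *)
Definition rhs_row (N r : nat) : C :=
  bailey_alpha q r * csum (fun k => bailey_gamma (r + k) * bailey_weight q (r + k) r) (N - r).

Lemma csum_rhs_term N : csum rhs_term N = csum (rhs_row N) N.
Proof.
  unfold rhs_term, rhs_row.
  rewrite (csum_ext _ (fun n =>
             csum (fun r => bailey_gamma n * (bailey_alpha q r * bailey_weight q n r)) (S n)))
    by (intros; rewrite csum_scal; reflexivity).
  rewrite csum_triangle. apply csum_ext. intros r _.
  rewrite <- csum_scal. apply csum_ext. intros. ring.
Qed.

Lemma Clim_rhs_row r : Clim (fun N => rhs_row N r) (bailey_alpha q r * bailey_delta r).
Proof.
  apply Clim_scal. apply Clim_shift. apply is_series_csum, is_series_bailey_delta.
Qed.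

Let Bgamma : R := qpoch_ubound p (Cmod r1) * qpoch_ubound p (Cmod r2).
Let Bweight : R := / (qpoch_lbound p (Cmod p) * qpoch_lbound p (Cmod p)).

Lemma Cmod_bailey_gamma_le n : (Cmod (bailey_gamma n) <= Bgamma * Cmod x ^ n)%R.
Proof.
  unfold bailey_gamma, Bgamma. rewrite !Cmod_mult, Cmod_pow.
  apply Rmult_le_compat; try apply Rmult_le_pos; try apply pow_le; try apply Cmod_ge_0; [|lra].
  apply Rmult_le_compat; try apply Cmod_ge_0; apply Cmod_qpoch_le; lra.
Qed.

Lemma Cmod_bailey_weight_le n r : (Cmod (bailey_weight q n r) <= Bweight)%R.
Proof.
  unfold bailey_weight, Bweight. pose proof (qpoch_lbound_pos p (Cmod p)).
  assert (H1 : (qpoch_lbound p (Cmod p) * qpoch_lbound p (Cmod p)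
                <= Cmod (qpoch p p (n - r) * qpoch p p (S (n + r))))%R).
  { rewrite Cmod_mult. apply Rmult_le_compat; try lra; apply qpoch_self_ge, Hp. }
  rewrite Cmod_inv.
  - apply Rinv_le_contravar; [nra | exact H1].
  - apply Cmult_neq_0; apply qpoch_self_neq0, Hp.
Qed.

Lemma Cmod_rhs_row_tail_le N r :
  (Cmod (csum (fun k => (bailey_gamma (r + k) * bailey_weight q (r + k) r)%C) (N - r))
   <= Bgamma * Bweight / (1 - Cmod x) * Cmod x ^ r)%R.
Proof.
  replace (Bgamma * Bweight / (1 - Cmod x) * Cmod x ^ r)%R
    with (Bgamma * Bweight * Cmod x ^ r / (1 - Cmod x))%R by (pose proof Hx'; field; lra).
  apply Cmod_csum_geometric; [split; [apply Cmod_ge_0 | exact Hx']|].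
  intros k. rewrite Cmod_mult.
  replace (Bgamma * Bweight * Cmod x ^ r * Cmod x ^ k)%R
    with (Bgamma * Cmod x ^ (r + k) * Bweight)%R by (rewrite pow_add; ring).
  apply Rmult_le_compat; try apply Cmod_ge_0; [apply Cmod_bailey_gamma_le | apply Cmod_bailey_weight_le].
Qed.

Lemma rhs_row_bound :
  exists (K t : R), (0 <= t < 1)%R /\ forall N r, (Cmod (rhs_row N r) <= K * t ^ r)%R.
Proof.
  set (C0 := (Bgamma * Bweight / (1 - Cmod x))%R).
  assert (HC0 : (0 <= C0)%R).
  { unfold C0, Bgamma, Bweight, qpoch_ubound. pose proof (qpoch_lbound_pos p (Cmod p)).
    pose proof (exp_pos (Cmod r1 / (1 - Cmod p))). pose proof (exp_pos (Cmod r2 / (1 - Cmod p))).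
    pose proof Hx'. apply Rlt_le, Rdiv_lt_0_compat; [apply Rmult_lt_0_compat|]; try nra.
    apply Rinv_0_lt_compat. nra. }
  (* (r+1) |x|^r <= t^r / (1 - t) with t = sqrt |x| *)
  set (t := sqrt (Cmod x)).
  assert (Ht : (0 <= t < 1)%R).
  { unfold t. split; [apply sqrt_pos|]. rewrite <- sqrt_1.
    apply sqrt_lt_1_alt. split; [apply Cmod_ge_0 | exact Hx']. }
  assert (Hxt : forall r, (Cmod x ^ r = t ^ r * t ^ r)%R).
  { intros r. unfold t. rewrite <- Rpow_mult_distr, sqrt_sqrt; [reflexivity | apply Cmod_ge_0]. }
  exists (4 * C0 / (1 - t))%R, t. split; [exact Ht|]. intros N r. unfold rhs_row.
  rewrite Cmod_mult.
  pose proof (Cmod_bailey_alpha_le q Hq r) as HA. pose proof (succ_mul_pow_le t r Ht) as HL.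
  pose proof (pow_le t r ltac:(lra)).
  apply Rle_trans with (4 * INR (S r) * (C0 * Cmod x ^ r))%R.
  { apply Rmult_le_compat; try apply Cmod_ge_0; auto. apply Cmod_rhs_row_tail_le. }
  rewrite Hxt.
  replace (4 * INR (S r) * (C0 * (t ^ r * t ^ r)))%R
    with (INR (S r) * t ^ r * (4 * C0) * t ^ r)%R by ring.
  replace (4 * C0 / (1 - t) * t ^ r)%R with (/ (1 - t) * (4 * C0) * t ^ r)%R by (field; lra).
  apply Rmult_le_compat_r; [lra|]. apply Rmult_le_compat_r; lra.
Qed.

Lemma Cmod_alpha_delta_bound :
  exists (K t : R), (0 <= t < 1)%R /\
    forall r, (Cmod (bailey_alpha q r * bailey_delta r)%C <= K * t ^ r)%R.
Proof.
  destruct rhs_row_bound as [K [t [Ht HK]]]. exists K, t. split; [exact Ht|]. intros r.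
  replace (bailey_alpha q r * bailey_delta r) with (bailey_alpha q r * bailey_delta r - 0) by ring.
  apply (Clim_norm_le _ _ _ _ 0 (Clim_rhs_row r)). intros N _.
  replace (rhs_row N r - 0) with (rhs_row N r) by ring. apply HK.
Qed.

Definition bailey_sum : C := Cseries (fun r => bailey_alpha q r * bailey_delta r).

Lemma is_series_bailey_sum : is_series (fun r => bailey_alpha q r * bailey_delta r) bailey_sum.
Proof.
  destruct Cmod_alpha_delta_bound as [K [t [Ht HK]]].
  apply Cseries_correct, (ex_series_C_geometric _ K t Ht HK).
Qed.

Theorem is_series_rhs_term : is_series rhs_term bailey_sum.
Proof.
  destruct rhs_row_bound as [K [t [Ht HK]]].
  apply is_series_csum, (filterlim_ext (fun N => csum (rhs_row N) N)).
  { intros N. symmetry. apply csum_rhs_term. }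
  apply (tannery rhs_row _ (fun r => bailey_alpha q r * bailey_delta r) _ K t Ht HK).
  - intros N. apply is_series_finite. intros r Hr. unfold rhs_row.
    replace (N - r)%nat with 0%nat by lia. simpl. ring.
  - apply Clim_rhs_row.
  - apply is_series_bailey_sum.
Qed.

Definition rhs_closed_term (n : nat) : C :=
  (qpoch r1 p n * qpoch r2 p n) / ((1 + Cpow q (2 * n + 1)) * qpoch (Cpow q 4) (Cpow q 4) n)
  * Cpow (Copp x) n.

Lemma rhs_term_closed n : rhs_term n = rhs_closed_term n.
Proof.
  unfold rhs_term, rhs_closed_term, bailey_gamma. rewrite bailey_pair by exact Hq.
  replace (Copp x) with (Copp 1 * x) by ring. rewrite Cpow_mult_l. unfold sgn, Cdiv. ring.
Qed.

Hypothesis Hak : forall k : nat, a * Cpow q (2 * k + 2) <> 1.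
Hypothesis Hck : forall k : nat, c * Cpow q (2 * k + 2) <> 1.

Lemma p_mul_Cpow_neq1 (z : C) :
  (forall k, z * Cpow q (2 * k + 2) <> 1) -> forall k, p * z * Cpow p k <> 1.
Proof.
  intros H k. replace (p * z * Cpow p k) with (z * Cpow q (2 * k + 2)); [apply H|].
  unfold p. rewrite <- Cpow_mult_r, (Nat.add_comm (2 * k) 2), Cpow_add_r. ring.
Qed.

Definition lhs_term (n : nat) : C :=
  (1 - Cpow q (2 * n + 1)) * (qpoch r1 p n * qpoch r2 p n) / (qpoch (p * a) p n * qpoch (p * c) p n)
  * Cpow x n * inner_sum q n.

Theorem is_series_lhs_term : gauss_value p x r1 r2 0 <> 0 ->
  is_series lhs_term ((1 - p) / gauss_value p x r1 r2 0 * bailey_sum).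
Proof.
  intros HD0.
  refine (is_series_C_ext
            (fun r => (1 - p) / gauss_value p x r1 r2 0 * (bailey_alpha q r * bailey_delta r))
            _ _ _ (is_series_C_scal _ _ _ is_series_bailey_sum)).
  (* D_r = D_0 (p;p)_(2r+1) / ((pa;p)_r (pc;p)_r (1-p)) cancels the Bailey denominators *)
  - intros r. pose proof (gauss_value_closed p x r1 r2 Hp Hx' x_r1_r2 r) as Hclosed.
    replace (x * r2) with (p * a) in Hclosed by (unfold x, r2; field; auto).
    replace (x * r1) with (p * c) in Hclosed by (unfold x, r1; field; auto).
    pose proof (qpoch_neq0 _ p r (p_mul_Cpow_neq1 a Hak)).
    pose proof (qpoch_neq0 _ p r (p_mul_Cpow_neq1 c Hck)).
    pose proof (qpoch_self_neq0 p Hp (S (2 * r))). pose proof (one_minus_neq0 p Hp).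
    unfold lhs_term, bailey_alpha, bailey_delta, bailey_gamma.
    replace (gauss_value p x r1 r2 r) with
      (gauss_value p x r1 r2 0 * qpoch p p (S (2 * r))
       / (qpoch (p * a) p r * qpoch (p * c) p r * (1 - p)))
      by (rewrite <- Hclosed; field; repeat split; auto).
    field. repeat split; auto.
Qed.

End BaileyLemma.

Theorem theorem8p1 (q a c : C) :
  (0 < Cmod q)%R -> (Cmod q < 1)%R ->
  a <> 0%R -> c <> 0%R ->
  (forall k : nat, a * Cpow q (2 * k + 2) <> 1%R) ->
  (forall k : nat, c * Cpow q (2 * k + 2) <> 1%R) ->
  (Cmod (a * c) < 1)%R ->
  exists S1 S2 P1 P2 P3 P4 : C,
    is_series (fun n : nat =>
        (1%R - Cpow q (2 * n + 1))
        * (qpoch (Cpow q 2 / a) (Cpow q 2) n * qpoch (Cpow q 2 / c) (Cpow q 2) n)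
        / (qpoch (Cpow q 2 * a) (Cpow q 2) n * qpoch (Cpow q 2 * c) (Cpow q 2) n)
        * Cpow (a * c) n * inner_sum q n) S1 /\
    is_series (fun n : nat =>
        (qpoch (Cpow q 2 / a) (Cpow q 2) n * qpoch (Cpow q 2 / c) (Cpow q 2) n)
        / ((1%R + Cpow q (2 * n + 1)) * qpoch (Cpow q 4) (Cpow q 4) n)
        * Cpow (Copp (a * c)) n) S2 /\
    is_qpoch_inf (Cpow q 2) (Cpow q 2) P1 /\
    is_qpoch_inf (a * c) (Cpow q 2) P2 /\
    is_qpoch_inf (Cpow q 2 * a) (Cpow q 2) P3 /\
    is_qpoch_inf (Cpow q 2 * c) (Cpow q 2) P4 /\
    S1 = (P1 * P2) / (P3 * P4) * S2.
Proof.
  intros _ Hq Ha Hc Hak Hck Hx.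
  assert (Hp : (Cmod (Cpow q 2) < 1)%R) by exact (Cmod_Cpow_succ_lt1 q 1 Hq).
  destruct (qpoch_cvg _ Hp (Cpow q 2)) as [P1 H1]. destruct (qpoch_cvg _ Hp (a * c)) as [P2 H2].
  destruct (qpoch_cvg _ Hp (Cpow q 2 * a)) as [P3 H3].
  destruct (qpoch_cvg _ Hp (Cpow q 2 * c)) as [P4 H4].
  set (D0 := gauss_value (Cpow q 2) (a * c) (Cpow q 2 / a) (Cpow q 2 / c) 0).
  assert (Hgauss : D0 * (P1 * P2) = (1 - Cpow q 2) * (P3 * P4)).
  { apply (q_gauss_sum _ _ _ _ Hp Hx (x_r1_r2 q a c Ha Hc) _ _ _ _ H1 H2).
    - replace (a * c * (Cpow q 2 / c)) with (Cpow q 2 * a) by (field; exact Hc). exact H3.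
    - replace (a * c * (Cpow q 2 / a)) with (Cpow q 2 * c) by (field; exact Ha). exact H4. }
  assert (HP3 : P3 <> 0) by exact (qpoch_lim_neq0 _ Hp _ _ (p_mul_Cpow_neq1 q a Hak) H3).
  assert (HP4 : P4 <> 0) by exact (qpoch_lim_neq0 _ Hp _ _ (p_mul_Cpow_neq1 q c Hck) H4).
  assert (HD0 : D0 <> 0).
  { intros E. rewrite E, Cmult_0_l in Hgauss. symmetry in Hgauss.
    apply (Cmult_neq_0 _ _ (one_minus_neq0 _ Hp) (Cmult_neq_0 _ _ HP3 HP4)), Hgauss. }
  exists ((1 - Cpow q 2) / D0 * bailey_sum q a c), (bailey_sum q a c), P1, P2, P3, P4.
  split; [exact (is_series_lhs_term q a c Hq Ha Hc Hx Hak Hck HD0)|].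
  split; [exact (is_series_C_ext _ _ _ (rhs_term_closed q a c Hq) (is_series_rhs_term q a c Hq Hx))|].
  do 4 (split; [assumption|]).
  replace ((1 - Cpow q 2) / D0) with (P1 * P2 / (P3 * P4)); [reflexivity|].
  field_simplify_eq; [|repeat split; assumption].
  transitivity (D0 * (P1 * P2)); [ring|]. rewrite Hgauss. ring.
Qed.
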